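(* Let $p$ be a prime, $m\ge1$, $n\ge1$ and $0\le k<n$ integers. The number of $[[n,k]]_{p^m}$ stabilizer codes is $$N(n,k,p^m)=\left(p^{m-1}\right)^{\frac{(n-k)(n+3k+1)}{2}}\begin{bmatrix} n\\ n-k\end{bmatrix}_p\prod_{j=0}^{n-k-1}\left(p^{n-j}+1\right),\qquad \begin{bmatrix} n\\ n-k\end{bmatrix}_p:=\prod_{j=0}^{n-k-1}\frac{p^{n-j}-1}{p^{n-k-j}-1}.$$
   Context: Qudits have dimension $d=p^m$ with configuration space $\mathbb{Z}_{p^m}$ (integers modulo $p^m$, not the Galois field). $\Lambda=\begin{pmatrix}0&I_n\\-I_n&0\end{pmatrix}$. On $\mathbb{C}^d$ with basis $\{|j\rangle\}_{j\in\mathbb{Z}_d}$, $X|j\rangle=|j+1\rangle$, $Z|j\rangle=\omega^j|j\rangle$, $\omega=e^{2\pi i/d}$; the $n$-qudit Pauli group is generated by the $X_j,Z_j$ (and $e^{\pi i/d}I$ if $d$ is even); every Pauli is a phase times $g(a)=X^{u_1}Z^{v_1}\otimes\cdots\otimes X^{u_n}Z^{v_n}$, $a=(u,v)\in\mathbb{Z}_d^{2n}$, and $g(a),g(b)$ commute iff $a^T\Lambda b=0$. An $[[n,k]]_d$ stabilizer group is $S=\langle g_1,\dots,g_{n-k}\rangle$ of pairwise commuting Paulis each having eigenvalue $+1$, with $|S|=d^{n-k}$; its check matrix is $H=[a_1|\cdots|a_{n-k}]$ where $g_j$ is a phase times $g(a_j)$ (the $a_j$ are linearly independent over $\mathbb{Z}_d$,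 i.e. $\sum x_ja_j=0\Rightarrow$ all $x_j=0$). Two stabilizer groups define the same $[[n,k]]_d$ stabilizer code iff their check matrices satisfy $H'=HA$ with $A\in\mathrm{GL}(n-k,\mathbb{Z}_d)$; equivalently a code is the subgroup of $\mathbb{Z}_d^{2n}$ spanned by $n-k$ linearly independent, pairwise symplectically orthogonal ($a_i^T\Lambda a_j=0$) vectors. *)

From HB Require Import structures.
From mathcomp Require Import all_boot all_order all_algebra.
Set Implicit Arguments. Unset Strict Implicit. Unset Printing Implicit Defensive.
Import GRing.Theory.
Local Open Scope ring_scope.

(* Vectors a = (u, v) in Z_d^{2n}, stored as row vectors of length n + n:
   the first n coordinates are u, the last n are v. *)
Definition pvec (d n : nat) := 'rV['Z_d]_(n + n).

(* Symplectic form a^T Lambda b = u_a . v_b - v_a . u_b,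
   with Lambda = [[0, I_n], [-I_n, 0]]. *)
Definition symp (d n : nat) (a b : pvec d n) : 'Z_d :=
  (lsubmx a *m (rsubmx b)^T - rsubmx a *m (lsubmx b)^T) 0 0.

Definition lin_indep (d n r : nat) (a : 'I_r -> pvec d n) : bool :=
  [forall x : {ffun 'I_r -> 'Z_d},
     (\sum_(j < r) x j *: a j == 0) ==> [forall j, x j == 0]].

Definition pairwise_symp_orth (d n r : nat) (a : 'I_r -> pvec d n) : bool :=
  [forall i, forall j, symp (a i) (a j) == 0].

Definition zspan (d n r : nat) (a : 'I_r -> pvec d n) : {set pvec d n} :=
  [set v | [exists x : {ffun 'I_r -> 'Z_d}, v == \sum_(j < r) x j *: a j]].

Definition is_stab_code (d n k : nat) (C : {set pvec d n}) : bool :=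
  [exists a : {ffun 'I_(n - k) -> pvec d n},
    [&& lin_indep a, pairwise_symp_orth a & C == zspan a]].

Definition stab_codes (d n k : nat) : {set {set pvec d n}} :=
  [set C | is_stab_code k C ].

From HB Require Import structures.
From mathcomp Require Import all_boot all_order all_algebra.
From mathcomp Require Import zify ring.
Set Implicit Arguments. Unset Strict Implicit. Unset Printing Implicit Defensive.
Import GRing.Theory Num.Theory.
Local Open Scope ring_scope.

(* Write Z := Z/p^m and h := p^(m-1), and count generator matrices rather than codes.
   Let the rows of A (i x N) be independent and lie in the kernel W of a matrix G such
   that v |-> v G maps onto Z^j. For v in W, the family (v; A) is dependent exactly when
   v = y A + u with h u = 0; there are p^i |W :&: ker h| such v, while |W| = p^(m(N-j))
   and |W :&: ker h| = p^((m-1)(N-j)), so v can be chosen in h^(N-j) (p^(N-j) - p^i)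
   ways. With G = 0 this counts the invertible r x r matrices, |GL_r(Z)|; with
   G = Lambda B^T, onto because independent rows have a right inverse, it counts the
   independent isotropic r x 2n matrices. Every code has exactly |GL_r(Z)| generator
   matrices, and dividing the two products factor by factor gives the formula. *)

(* mathcomp declares no finZmodType instance on pairs; this derives it. *)
HB.saturate prod.

Lemma card_ker_imset (A B : finZmodType) (f : A -> B) (D : {set A}) :
  {morph f : x y / x - y} -> zmod_closed D ->
  #|D| = (#|[set x in D | f x == 0%R]| * #|f @: D|)%N.
Proof.
move=> fB [D0 DB].
have f0 : f 0 = 0 by rewrite -(subrr 0) fB subrr.
have DN x : x \in D -> - x \in D by move=> Dx; rewrite -sub0r DB.
rewrite -sum1_card (partition_big_imset f) /= mulnC -sum_nat_const.
apply: eq_bigr => _ /imsetP [x0 Dx0 ->]; rewrite sum1dep_card.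
have -> : [set x | (x \in D) && (f x == f x0)] =
          [set x0 + y | y in [set x in D | f x == 0]].
  apply/setP => x; rewrite inE; apply/andP/imsetP => [[Dx /eqP fx] | [y]].
    exists (x - x0); last by rewrite addrC subrK.
    by rewrite inE DB //= fB fx subrr.
  rewrite inE => /andP [Dy /eqP fy] ->.
  by rewrite -[y]opprK DB ?DN //= fB -[- y]sub0r fB f0 fy !subr0.
by rewrite card_imset //; apply: addrI.
Qed.

Lemma card_col_mx (T : finType) i N
    (P : pred 'M[T]_(i, N)) (Q : pred 'M[T]_(1 + i, N)) c :
  (forall v B, Q (col_mx v B) -> P B) ->
  (forall B, P B -> #|[set v | Q (col_mx v B)]| = c) ->
  #|[set A | Q A]| = (#|[set B | P B]| * c)%N.
Proof.
move=> QP cQ.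
rewrite -sum1dep_card (partition_big (@dsubmx _ 1 i N) predT) //=.
rewrite -sum1dep_card big_distrl [RHS]big_mkcond /=.
apply: eq_bigr => B _; rewrite sum1dep_card mul1n.
have -> : [set A | Q A & dsubmx A == B] = [set col_mx v B | v in [set v | Q (col_mx v B)]].
  apply/setP => A; rewrite inE; apply/andP/imsetP => [[QA /eqP <-] | [v]].
    by exists (usubmx A); rewrite ?inE vsubmxK.
  by rewrite inE => Qv ->; rewrite col_mxKd.
rewrite card_imset; last by move=> u v /eq_col_mx [].
case: ifP => [/cQ // | PB]; apply/eqP; rewrite cards_eq0; apply/eqP/setP => v.
by rewrite !inE; apply/negP => /QP; rewrite PB.
Qed.

Lemma card_rV_in (T : finType) N (P : {pred T}) :
  #|[set v : 'rV[T]_N | [forall k, v 0 k \in P]]| = (#|P| ^ N)%N.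
Proof.
have row_ffun_inj : injective (fun v : 'rV[T]_N => [ffun k => v 0 k]).
  by move=> u v /ffunP uv; apply/rowP => k; have := uv k; rewrite !ffunE.
rewrite -(card_imset _ row_ffun_inj) -[in RHS](card_ord N) -card_ffun_on -cardsE.
apply: eq_card => f; rewrite inE; apply/imsetP/ffun_onP => [[v] | fP].
  by rewrite inE => /forallP vP -> k; rewrite ffunE.
exists (\row_k f k); last by apply/ffunP => k; rewrite !ffunE mxE.
by rewrite inE; apply/forallP => k; rewrite mxE.
Qed.

Section RowIndependence.
Variable R : finPzRingType.

Definition row_indep i N (A : 'M[R]_(i, N)) : bool :=
  [forall x : 'rV[R]_i, (x *m A == 0) ==> (x == 0)].

Lemma row_indepP i N (A : 'M[R]_(i, N)) :
  reflect (forall x : 'rV[R]_i, x *m A = 0 -> x = 0) (row_indep A).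
Proof.
apply: (iffP forallP) => [Aind x /eqP xA | Aind x]; last by apply/implyP => /eqP /Aind ->.
by apply/eqP; move/implyP: (Aind x); apply.
Qed.

Lemma row_indep_inj i N (A : 'M[R]_(i, N)) :
  row_indep A -> injective (fun x : 'rV[R]_i => x *m A).
Proof.
move/row_indepP=> Aind x y /= xyA; apply/eqP; rewrite -subr_eq0; apply/eqP.
by apply: Aind; rewrite mulmxBl xyA subrr.
Qed.

Lemma row_indep_mul r i N (X : 'M[R]_(r, i)) (A : 'M[R]_(i, N)) :
  row_indep X -> row_indep A -> row_indep (X *m A).
Proof.
move=> /row_indepP Xind /row_indepP Aind; apply/row_indepP => y.
by rewrite mulmxA => /Aind /Xind.
Qed.

Lemma row_indep_dsub i N (v : 'rV[R]_N) (A : 'M[R]_(i, N)) :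
  row_indep (col_mx v A) -> row_indep A.
Proof.
move/row_indepP=> vAind; apply/row_indepP => x xA.
have := vAind (row_mx 0 x); rewrite mul_row_col mul0mx add0r xA => /(_ erefl) /eqP.
by rewrite row_mx_eq0 => /andP [_ /eqP].
Qed.

Lemma mul_rV_col_mx i N (x : 'rV[R]_(1 + i)) (v : 'rV[R]_N) (A : 'M[R]_(i, N)) :
  x *m col_mx v A = lsubmx x 0 0 *: v + rsubmx x *m A.
Proof.
by rewrite -{1}(hsubmxK x) mul_row_col {1}(mx11_scalar (lsubmx x)) mul_scalar_mx.
Qed.

Lemma row_indep_col_mxPn i N (v : 'rV[R]_N) (A : 'M[R]_(i, N)) : row_indep A ->
  reflect (exists c y, c != 0 /\ c *: v = y *m A) (~~ row_indep (col_mx v A)).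
Proof.
move=> /row_indepP Aind; apply: (iffP idP) => [|[c [y [c0 cv]]]].
  rewrite negb_forall => /existsP [x]; rewrite negb_imply => /andP [/eqP xvA x0].
  exists (lsubmx x 0 0), (- rsubmx x); split; last first.
    by apply/eqP; rewrite mulNmx -addr_eq0 -mul_rV_col_mx xvA.
  apply: contra x0 => /eqP c0.
  move: xvA; rewrite mul_rV_col_mx c0 scale0r add0r => /Aind x2.
  by rewrite -(hsubmxK x) x2 (mx11_scalar (lsubmx x)) c0 raddf0 row_mx0.
apply/negP => /row_indepP/(_ (row_mx c%:M (- y))).
rewrite mul_row_col mul_scalar_mx mulNmx cv subrr => /(_ erefl) /eqP.
rewrite row_mx_eq0 => /andP [/eqP /matrixP /(_ 0 0)].
by rewrite !mxE eqxx mulr1n => /eqP; rewrite (negPf c0).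
Qed.

Lemma scaler_rV_eq0 N (c : R) (v : 'rV[R]_N) :
  (c *: v == 0) = [forall k, c * v 0 k == 0].
Proof.
apply/eqP/forallP => [cv0 k | cv0]; last by apply/rowP => k; rewrite !mxE; apply/eqP.
by have /rowP/(_ k) := cv0; rewrite !mxE => ->.
Qed.

Lemma card_rV_ann N (c : R) :
  #|[set v : 'rV[R]_N | c *: v == 0]| = (#|[set x : R | (c * x == 0)%R]| ^ N)%N.
Proof.
rewrite -card_rV_in; apply: eq_card => v; rewrite !inE scaler_rV_eq0.
by apply: eq_forallb => k; rewrite inE.
Qed.

Lemma rV_ann_sub N (a b : R) :
  (forall c, a * c = 0 -> exists y, c = b * y) ->
  forall v : 'rV[R]_N, a *: v = 0 -> exists u, v = b *: u.
Proof.
move=> ann_ab v /eqP; rewrite scaler_rV_eq0 => /forallP av0.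
have [y vy] : exists y : 'I_N -> R, forall k, v 0 k = b * y k.
  by apply: (@fin_all_exists _ (fun=> R) (fun k y => v 0 k = b * y)) => k;
    apply: ann_ab; apply/eqP.
by exists (\row_k y k); apply/rowP => k; rewrite !mxE vy.
Qed.

End RowIndependence.

Section SymplecticForm.
Variables (R : comPzRingType) (n : nat).

Definition symp_mx : 'M[R]_(n + n) := block_mx 0 1%:M (- 1%:M) 0.

Lemma symp_mxE (a b : 'rV[R]_(n + n)) :
  a *m symp_mx *m b^T = lsubmx a *m (rsubmx b)^T - rsubmx a *m (lsubmx b)^T.
Proof.
rewrite -{1}(hsubmxK a) -{1}(hsubmxK b) mul_row_block tr_row_mx mul_row_col.
by rewrite ?mulmx0 ?mul0mx ?add0r ?addr0 mulmx1 mulmxN mulmx1 mulNmx addrC.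
Qed.

Lemma tr_symp_mx : symp_mx^T = - symp_mx.
Proof.
rewrite tr_block_mx opp_block_mx !trmx0 !oppr0 tr_scalar_mx.
by rewrite linearN /= tr_scalar_mx opprK.
Qed.

Lemma symp_mx_sqr : symp_mx *m symp_mx = - 1%:M.
Proof.
rewrite mulmx_block ?mulmx0 ?mul0mx ?add0r ?addr0 mul1mx mulmx1.
by rewrite [in RHS](scalar_mx_block n n 1) opp_block_mx oppr0.
Qed.

Lemma symp_mx_alt (v : 'rV[R]_(n + n)) : v *m symp_mx *m v^T = 0.
Proof.
have trmx11 (X : 'M[R]_1) : X^T = X.
  by apply/matrixP => a b; rewrite (ord1 a) (ord1 b) mxE.
by rewrite symp_mxE -[X in _ - X]trmx11 trmx_mul trmxK subrr.
Qed.

Definition isotropic i (A : 'M[R]_(i, n + n)) : bool := A *m symp_mx *m A^T == 0.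

Lemma isotropic_col_mx i (v : 'rV[R]_(n + n)) (B : 'M[R]_(i, n + n)) :
  isotropic (col_mx v B) = (v *m (symp_mx *m B^T) == 0) && isotropic B.
Proof.
rewrite /isotropic mul_col_mx tr_col_mx mul_col_row block_mx_eq0 symp_mx_alt eqxx /=.
have -> : B *m symp_mx *m v^T = - (v *m symp_mx *m B^T)^T.
  by rewrite !trmx_mul trmxK tr_symp_mx mulNmx mulmxN opprK mulmxA.
by rewrite oppr_eq0 trmx_eq0 andbA andbb mulmxA.
Qed.

End SymplecticForm.

Section PrimePowerModulus.
Variables (p m : nat).
Hypotheses (p_pr : prime p) (m_gt0 : (0 < m)%N).
Local Notation d := (p ^ m)%N.
Local Notation Z := 'Z_(p ^ m).

Let p_gt1 : (1 < p)%N := prime_gt1 p_pr.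
Let p_gt0 : (0 < p)%N := prime_gt0 p_pr.

Lemma pm_gt1 : (1 < d)%N.
Proof. by rewrite -(expn0 p) ltn_exp2l. Qed.

Lemma pm_split : (p ^ (m - 1) * p)%N = d.
Proof. by rewrite -expnSr subn1 prednK. Qed.

Lemma expn_pm e : ((p ^ m) ^ e = (p ^ (m - 1)) ^ e * p ^ e)%N.
Proof. by rewrite -expnMn pm_split. Qed.

Lemma card_Zpm_mx r N : #|{: 'M[Z]_(r, N)}| = (d ^ (r * N))%N.
Proof. by rewrite card_mx card_ord Zp_cast // pm_gt1. Qed.

Lemma Zpm_val_lt (c : Z) : (val c < d)%N.
Proof. by have := ltn_ord c; rewrite [X in (_ < X)%N -> _]Zp_cast // pm_gt1. Qed.

Lemma Zpm_natr_eq0 x : ((x%:R : Z) == 0) = (d %| x)%N.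
Proof.
apply/eqP/idP => [/(congr1 val) | dx].
  by rewrite /= val_Zp_nat ?pm_gt1 // => /eqP.
by apply: val_inj; rewrite /= val_Zp_nat ?pm_gt1 //; apply/eqP.
Qed.

Section Factorization.
Variables a b : nat.
Hypothesis ab_pm : (a * b)%N = d.

Let ab_gt0 : (0 < a)%N && (0 < b)%N.
Proof. by rewrite -muln_gt0 ab_pm expn_gt0 p_gt0. Qed.
Let a_gt0 : (0 < a)%N. Proof. by case/andP: ab_gt0. Qed.
Let b_gt0 : (0 < b)%N. Proof. by case/andP: ab_gt0. Qed.

Lemma natr_mul_eq0 (c : Z) : (a%:R * c == 0) = (b %| val c)%N.
Proof.
by rewrite -{1}[c]natr_Zp -natrM Zpm_natr_eq0 -(@dvdn_pmul2l a b) ?ab_pm.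
Qed.

Lemma natr_mul_eq0P (c : Z) : a%:R * c = 0 -> exists y, c = b%:R * y.
Proof.
move/eqP; rewrite natr_mul_eq0 => /dvdnP [y cy].
by exists y%:R; rewrite -{1}[c]natr_Zp cy natrM mulrC.
Qed.

Lemma card_natr_ann : #|[set c : Z | a%:R * c == 0]| = a.
Proof.
have -> : [set c : Z | a%:R * c == 0] = [set (b * i)%:R | i : 'I_a].
  apply/setP => c; rewrite inE natr_mul_eq0; apply/idP/imsetP => [/dvdnP [q cq] | [i _ ->]].
    have q_lt : (q < a)%N by rewrite -(ltn_pmul2r b_gt0) -cq ab_pm Zpm_val_lt.
    by exists (Ordinal q_lt) => //=; rewrite mulnC -cq natr_Zp.
  by rewrite -natr_mul_eq0 -natrM mulnA ab_pm Zpm_natr_eq0 dvdn_mulr.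
rewrite card_imset ?card_ord // => i j /(congr1 val) /=.
have lt_d (l : 'I_a) : (b * l < d)%N by rewrite -ab_pm mulnC ltn_pmul2r.
rewrite !val_Zp_nat ?pm_gt1 // !modn_small // => /eqP.
by rewrite eqn_pmul2l // => /eqP /val_inj.
Qed.

End Factorization.

Definition zh : Z := (p ^ (m - 1))%:R.
Definition zp : Z := p%:R.

Let zh_zp_pm : (p ^ (m - 1) * p = d)%N := pm_split.
Let zp_zh_pm : (p * p ^ (m - 1) = d)%N. Proof. by rewrite mulnC pm_split. Qed.

Lemma zh_neq0 : zh != 0.
Proof.
rewrite Zpm_natr_eq0; apply/negP => /dvdn_leq; rewrite expn_gt0 p_gt0 => /(_ isT).
by rewrite leq_exp2l // leqNgt ltn_subrL m_gt0.
Qed.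

Lemma mul_zh_zp : zh * zp = 0.
Proof. by rewrite -natrM zh_zp_pm; apply/eqP; rewrite Zpm_natr_eq0. Qed.

Lemma Zpm_unit_or_ann_zh (c : Z) : c \is a GRing.unit \/ zh * c = 0.
Proof.
case pc: (p %| val c)%N; first by right; apply/eqP; rewrite (natr_mul_eq0 zh_zp_pm).
left; rewrite -[c]natr_Zp unitZpE ?pm_gt1 // coprime_pexpl // prime_coprime //.
by rewrite pc.
Qed.

Lemma zh_dvd (c : Z) : c != 0 -> exists y, y * c = zh.
Proof.
move=> c0; have c_gt0 : (0 < val c)%N.
  by rewrite lt0n; apply: contra c0 => /eqP c0'; rewrite -[c]natr_Zp c0'.
set e := logn p (val c); set u := (val c %/ p ^ e)%N.
have cu : val c = (u * p ^ e)%N by rewrite divnK ?pfactor_dvdnn.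
have pu : ~~ (p %| u)%N.
  apply/negP => /dvdnP [w uw].
  have : (p ^ e.+1 %| val c)%N by rewrite cu uw expnS -mulnA dvdn_mull.
  by rewrite pfactor_dvdn // ltnn.
have e_lt : (e < m)%N.
  rewrite -(ltn_exp2l _ _ p_gt1); apply: leq_ltn_trans (Zpm_val_lt c).
  by rewrite cu leq_pmull // lt0n; apply: contraNneq pu => ->.
have uU : (u%:R : Z) \is a GRing.unit.
  by rewrite unitZpE ?pm_gt1 // coprime_pexpl // prime_coprime.
exists ((p ^ (m - 1 - e))%:R / u%:R).
rewrite -[c]natr_Zp cu natrM mulrA divrK // -natrM -expnD subnK //.
by rewrite -ltnS subn1 prednK.
Qed.

Lemma card_rV_ann_zh N : #|[set v : 'rV[Z]_N | zh *: v == 0]| = ((p ^ (m - 1)) ^ N)%N.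
Proof. by rewrite card_rV_ann (card_natr_ann zh_zp_pm). Qed.

Lemma card_rV_ann_zp N : #|[set v : 'rV[Z]_N | zp *: v == 0]| = (p ^ N)%N.
Proof. by rewrite card_rV_ann (card_natr_ann zp_zh_pm). Qed.

Lemma Zpm_row_indep_col_mxPn i N (v : 'rV[Z]_N) (A : 'M[Z]_(i, N)) : row_indep A ->
  reflect (exists y u, zh *: u = 0 /\ v = y *m A + u) (~~ row_indep (col_mx v A)).
Proof.
move=> Aind; apply: (iffP (row_indep_col_mxPn v Aind)) => [[c [y [c0 cv]]] | [y [u [hu ->]]]].
  have [c' c'c] := zh_dvd c0.
  have /(rV_ann_sub (natr_mul_eq0P zp_zh_pm)) [y' c'y] : zp *: (c' *: y) = 0.
    apply: (elimT (row_indepP _) Aind).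
    by rewrite -!scalemxAl -cv !scalerA -mulrA c'c mulrC mul_zh_zp scale0r.
  exists y', (v - y' *m A); split; last by rewrite addrC subrK.
  by rewrite scalerBr scalemxAl -c'y -scalemxAl -cv scalerA c'c subrr.
exists zh, (zh *: y); split; first exact: zh_neq0.
by rewrite scalerDr hu addr0 scalemxAl.
Qed.

Section KernelCounting.
Variables (N j : nat) (G : 'M[Z]_(N, j)).
Local Notation kerG := [set v : 'rV[Z]_N | v *m G == 0].
Local Notation ann_zh := [set v : 'rV[Z]_N | zh *: v == 0].

Lemma card_dep_ext i (A : 'M[Z]_(i, N)) : row_indep A -> A *m G = 0 ->
  #|[set v in kerG | ~~ row_indep (col_mx v A)]| = (p ^ i * #|kerG :&: ann_zh|)%N.
Proof.
move=> Aind AG0.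
pose f (yu : 'rV[Z]_i * 'rV[Z]_N) := yu.1 *m A + yu.2.
pose D := setX [set: 'rV[Z]_i] (kerG :&: ann_zh).
have fB : {morph f : x y / x - y}.
  by move=> [y u] [y' u']; rewrite /f /= mulmxBl opprD addrACA.
have D_sub : zmod_closed D.
  split; first by rewrite !inE /= mul0mx scaler0 !eqxx.
  move=> [y u] [y' u']; rewrite !inE /= mulmxBl scalerBr.
  by move=> /andP [/eqP -> /eqP ->] /andP [/eqP -> /eqP ->]; rewrite !subrr !eqxx.
have fD : f @: D = [set v in kerG | ~~ row_indep (col_mx v A)].
  apply/setP => v; rewrite !inE; apply/imsetP/andP.
    move=> [[y u]]; rewrite !inE /= => /andP [/eqP uG /eqP hu] ->; split.
      by rewrite /f mulmxDl -mulmxA AG0 mulmx0 add0r uG.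
    by apply/(Zpm_row_indep_col_mxPn _ Aind); exists y, u.
  move=> [/eqP vG /(Zpm_row_indep_col_mxPn _ Aind) [y [u [hu vyu]]]].
  exists (y, u); last by rewrite vyu.
  have uE : u = v - y *m A by rewrite vyu addrAC subrr add0r.
  by rewrite !inE /= hu {1}uE mulmxBl vG -mulmxA AG0 mulmx0 subrr !eqxx.
have kerf : #|[set x in D | f x == 0]| = ((p ^ (m - 1)) ^ i)%N.
  rewrite -card_rV_ann_zh -(@card_imset _ _ (fun y => (y, - (y *m A)))); last first.
    by move=> y y' [].
  apply/eq_card => -[y u]; rewrite !inE /=; apply/idP/imsetP => [|[y' hy' [-> ->]]].
    move=> /andP [/andP [_ /eqP hu] /eqP fyu].
    have uE : u = - (y *m A) by apply/eqP; rewrite -addr_eq0 addrC; apply/eqP.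
    exists y; last by rewrite uE.
    rewrite inE; apply/eqP/(elimT (row_indepP _) Aind).
    by rewrite -scalemxAl -[y *m A]opprK -uE scalerN hu oppr0.
  move: hy'; rewrite inE => /eqP hy'.
  by rewrite /f /= subrr mulNmx -mulmxA AG0 mulmx0 scalerN scalemxAl hy' mul0mx !oppr0 !eqxx.
have := card_ker_imset fB D_sub.
rewrite kerf fD cardsX cardsT card_Zpm_mx mul1n expn_pm -mulnA.
by move/eqP; rewrite eqn_pmul2l ?expn_gt0 ?p_gt0 // => /eqP <-.
Qed.

Lemma card_indep_ext i (A : 'M[Z]_(i, N)) : row_indep A -> A *m G = 0 ->
  (#|[set v in kerG | row_indep (col_mx v A)]| + p ^ i * #|kerG :&: ann_zh|)%N
  = #|kerG|.
Proof.
move=> Aind AG0; rewrite -(card_dep_ext Aind AG0).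
rewrite -(cardsID [set v | row_indep (col_mx v A)] kerG).
by congr (_ + _)%N; apply: eq_card => v; rewrite !inE andbC.
Qed.

Section Surjective.
Hypothesis G_surj : forall t : 'rV[Z]_j, exists v, v *m G = t.

Lemma surj_dim_leq : (j <= N)%N.
Proof.
have : (#|[set: 'rV[Z]_j]| <= #|[set: 'rV[Z]_N]|)%N.
  apply: leq_trans (leq_imset_card (fun v : 'rV[Z]_N => v *m G) _).
  apply/subset_leq_card/subsetP => t _; have [v <-] := G_surj t.
  by apply: imset_f; rewrite inE.
by rewrite !cardsT !card_Zpm_mx !mul1n leq_exp2l // pm_gt1.
Qed.

Let mulG_B : {morph (fun v : 'rV[Z]_N => v *m G) : x y / x - y}.
Proof. by move=> x y; apply: mulmxBl. Qed.

Lemma card_ker_surj : #|kerG| = ((p ^ m) ^ (N - j))%N.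
Proof.
have setT_closed : zmod_closed [set: 'rV[Z]_N] by split=> [|? ? _ _]; rewrite inE.
have := card_ker_imset mulG_B setT_closed.
have -> : [set v in [set: 'rV[Z]_N] | v *m G == 0] = kerG by apply/setP => v; rewrite !inE.
have -> : [set v *m G | v in [set: 'rV[Z]_N]] = [set: 'rV[Z]_j].
  apply/setP => t; rewrite inE; have [v <-] := G_surj t; exact: imset_f.
rewrite !cardsT !card_Zpm_mx !mul1n -{1}(subnK surj_dim_leq) expnD.
by move/eqP; rewrite eqn_pmul2r ?expn_gt0 ?p_gt0 // => /eqP.
Qed.

Lemma card_ker_ann_surj : #|kerG :&: ann_zh| = ((p ^ (m - 1)) ^ (N - j))%N.
Proof.
(* Count U := {u | zp (u G) = 0} along u |-> u G and along u |-> zp u. *)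
pose U := [set u : 'rV[Z]_N | zp *: (u *m G) == 0].
have U_closed : zmod_closed U.
  split=> [|x y]; rewrite !inE ?mul0mx ?scaler0 //.
  by rewrite mulG_B scalerBr => /eqP -> /eqP ->; rewrite subrr.
have zp_B : {morph (fun v : 'rV[Z]_N => zp *: v) : x y / x - y}.
  by move=> x y; apply: scalerBr.
have := card_ker_imset mulG_B U_closed.
have := card_ker_imset zp_B U_closed.
have -> : [set u in U | zp *: u == 0] = [set v : 'rV[Z]_N | zp *: v == 0].
  apply/setP => u; rewrite !inE; apply/andP/idP => [[] // | /eqP zpu].
  by rewrite scalemxAl zpu mul0mx eqxx.
have -> : [set zp *: u | u in U] = kerG :&: ann_zh.
  apply/setP => v; rewrite !inE; apply/imsetP/andP => [[u] | [vG /eqP zhv]].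
    by rewrite inE scalemxAl => zpuG ->; rewrite zpuG scalerA mul_zh_zp scale0r eqxx.
  have [u vE] := rV_ann_sub (natr_mul_eq0P zh_zp_pm) zhv.
  by exists u; rewrite // inE scalemxAl -vE.
have -> : [set u in U | u *m G == 0] = kerG.
  apply/setP => u; rewrite !inE; apply/andP/idP => [[] // | /eqP uG].
  by rewrite uG scaler0 eqxx.
have -> : [set v *m G | v in U] = [set t : 'rV[Z]_j | zp *: t == 0].
  apply/setP => t; rewrite inE; apply/imsetP/idP => [[u] | zpt].
    by rewrite inE => zpuG ->.
  by have [v vG] := G_surj t; exists v; rewrite // inE vG.
rewrite !card_rV_ann_zp card_ker_surj => -> /eqP.
rewrite expn_pm -mulnA -expnD subnK ?surj_dim_leq // mulnC.
by rewrite eqn_pmul2r ?expn_gt0 ?p_gt0 // => /eqP.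
Qed.

Lemma card_indep_ext_surj i (A : 'M[Z]_(i, N)) : row_indep A -> A *m G = 0 ->
  #|[set v in kerG | row_indep (col_mx v A)]|
  = ((p ^ (m - 1)) ^ (N - j) * (p ^ (N - j) - p ^ i))%N.
Proof.
move=> Aind AG0; have := card_indep_ext Aind AG0.
rewrite card_ker_surj card_ker_ann_surj expn_pm mulnBr => <-.
by rewrite mulnC addnK.
Qed.

End Surjective.
End KernelCounting.

Lemma card_row_indep i N :
  #|[set A : 'M[Z]_(i, N) | row_indep A]|
  = (\prod_(l < i) ((p ^ (m - 1)) ^ N * (p ^ N - p ^ l)))%N.
Proof.
elim: i => [|i IH].
  rewrite big_ord0 -[RHS](card_Zpm_mx 0 N) -cardsT; apply: eq_card => A.
  by rewrite !inE; apply/row_indepP => x _; apply/rowP => -[].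
rewrite big_ord_recr -IH /= -[i.+1]/(1 + i)%N.
apply: card_col_mx => [v B | B Bind]; first exact: row_indep_dsub.
have G_surj (t : 'rV[Z]_0) : exists v : 'rV[Z]_N, v *m 0 = t.
  by exists 0; apply/rowP => -[].
rewrite -[in RHS](subn0 N) -(card_indep_ext_surj G_surj Bind (mulmx0 _ _)).
by apply: eq_card => v; rewrite !inE mulmx0 eqxx.
Qed.

Lemma row_indep_unit_coord i N (a : 'rV[Z]_N) (A : 'M[Z]_(i, N)) (y : 'rV[Z]_i) :
  row_indep (col_mx a A) -> exists k, (a - y *m A) 0 k \is a GRing.unit.
Proof.
move=> aAind; have Aind := row_indep_dsub aAind.
apply/existsP; apply: contraLR aAind; rewrite negb_exists => /forallP nunit.
have zh_w : zh *: (a - y *m A) = 0.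
  apply/eqP; rewrite scaler_rV_eq0; apply/forallP => k.
  case: (Zpm_unit_or_ann_zh ((a - y *m A) 0 k)) => [wk | /eqP //].
  by move: (nunit k); rewrite wk.
apply/(Zpm_row_indep_col_mxPn a Aind).
by exists y, (a - y *m A); split; last by rewrite addrC subrK.
Qed.

Lemma row_indep_rinv i N (A : 'M[Z]_(i, N)) : row_indep A -> exists X, A *m X = 1%:M.
Proof.
(* Extend a right inverse X' of A' by means of a unit coordinate of the residue w of a. *)
elim: i A => [|i IH] A; first by exists 0; apply/matrixP => -[].
rewrite -[i.+1]/(1 + i)%N in A *; rewrite -[A]vsubmxK.
set a := usubmx A; set A' := dsubmx A => aAind.
have [X' AX'] := IH A' (row_indep_dsub aAind).
have [k wk] := row_indep_unit_coord (a *m X') aAind.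
set w := a - a *m X' *m A' in wk.
pose x : 'cV[Z]_N := (w 0 k)^-1 *: (delta_mx k 0 - X' *m (A' *m delta_mx k 0)).
have A'x : A' *m x = 0.
  by rewrite /x -scalemxAr mulmxBr !mulmxA AX' mul1mx subrr scaler0.
have ax : a *m x = 1%:M.
  rewrite /x -scalemxAr mulmxBr !mulmxA -mulmxBl -/w -colE (mx11_scalar (col k w)).
  have -> : col k w 0 0 = w 0 k by rewrite mxE.
  by rewrite scale_scalar_mx mulVr.
exists (row_mx x (X' - x *m (a *m X'))).
rewrite mul_col_row !mulmxBr !mulmxA ax A'x AX' !mul1mx !mul0mx subrr subr0.
by rewrite -scalar_mx_block.
Qed.

Section Codes.
Variable n : nat.
Local Notation Om := (symp_mx Z n).

Lemma card_isotropic_indep i :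
  #|[set A : 'M[Z]_(i, n + n) | row_indep A && isotropic A]|
  = (\prod_(l < i) ((p ^ (m - 1)) ^ (n + n - l) * (p ^ (n + n - l) - p ^ l)))%N.
Proof.
elim: i => [|i IH].
  rewrite big_ord0 -[RHS](card_Zpm_mx 0 (n + n)) -cardsT; apply: eq_card => A.
  rewrite !inE; apply/andP; split; first by apply/row_indepP => x _; apply/rowP => -[].
  by apply/eqP/matrixP => -[].
rewrite big_ord_recr -IH /= -[i.+1]/(1 + i)%N.
apply: card_col_mx => [v B | B /andP [Bind Biso]].
  by case/andP=> /row_indep_dsub -> /=; rewrite isotropic_col_mx => /andP [].
have G_surj (t : 'rV[Z]_i) : exists v, v *m (Om *m B^T) = t.
  have [X BX] := row_indep_rinv Bind; exists (- (t *m X^T *m Om)).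
  rewrite mulNmx -!mulmxA (mulmxA Om) symp_mx_sqr mulNmx mul1mx !mulmxN opprK.
  by rewrite -trmx_mul BX trmx1 mulmx1.
rewrite -(card_indep_ext_surj G_surj Bind); last by rewrite mulmxA; apply/eqP.
by apply: eq_card => v; rewrite !inE isotropic_col_mx Biso andbT andbC.
Qed.

Definition mx_span r (A : 'M[Z]_(r, n + n)) : {set 'rV[Z]_(n + n)} :=
  [set x *m A | x in [set: 'rV[Z]_r]].

Local Notation gens r := [set A : 'M[Z]_(r, n + n) | row_indep A && isotropic A].

Lemma card_mx_span r (A : 'M[Z]_(r, n + n)) :
  row_indep A -> #|mx_span A| = ((p ^ m) ^ r)%N.
Proof.
by move=> Aind; rewrite card_imset ?cardsT ?card_Zpm_mx ?mul1n //; apply: row_indep_inj.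
Qed.

Lemma mx_span_fiber r (A0 : 'M[Z]_(r, n + n)) : A0 \in gens r ->
  [set A in gens r | mx_span A == mx_span A0]
  = [set X *m A0 | X in [set X : 'M[Z]_r | row_indep X]].
Proof.
rewrite inE => /andP [A0ind A0iso].
apply/setP => A; rewrite !inE; apply/andP/imsetP => [[/andP [Aind _] /eqP AA0] | [X]].
  have [X XA] : exists X : 'I_r -> 'rV[Z]_r, forall l, row l A = X l *m A0.
    apply: (@fin_all_exists _ (fun=> 'rV[Z]_r) (fun l x => row l A = x *m A0)) => l.
    have : row l A \in mx_span A by rewrite rowE; apply: imset_f; rewrite inE.
    by rewrite AA0 => /imsetP [x _ ->]; exists x.
  have AE : A = \matrix_l X l *m A0 by apply/row_matrixP => l; rewrite row_mul rowK XA.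
  exists (\matrix_l X l); last exact: AE.
  rewrite inE; apply/row_indepP => y yX; apply: (elimT (row_indepP _) Aind).
  by rewrite AE mulmxA yX mul0mx.
rewrite inE => Xind ->; have XAind := row_indep_mul Xind A0ind.
rewrite XAind /isotropic.
have -> : X *m A0 *m Om *m (X *m A0)^T = X *m (A0 *m Om *m A0^T) *m X^T.
  by rewrite trmx_mul !mulmxA.
rewrite (eqP A0iso) mulmx0 mul0mx eqxx eqEcard !card_mx_span // leqnn !andbT.
split=> //; apply/subsetP => _ /imsetP [y _ ->].
by rewrite mulmxA; apply: imset_f; rewrite inE.
Qed.

Lemma card_gens r :
  #|gens r| = (#|@mx_span r @: gens r| * #|[set X : 'M[Z]_r | row_indep X]|)%N.
Proof.
rewrite -sum1_card (partition_big_imset (@mx_span r)) /= -sum_nat_const.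
apply: eq_bigr => _ /imsetP [A0 A0gen ->].
rewrite sum1dep_card -[LHS]/#|[set A in gens r | mx_span A == mx_span A0]|.
rewrite mx_span_fiber // card_imset //.
move: A0gen; rewrite inE => /andP [A0ind _] X Y /= XY.
by apply/row_matrixP => l; apply: (row_indep_inj A0ind); rewrite /= -!row_mul XY.
Qed.

Lemma sum_scale_rows r (a : 'I_r -> pvec (p ^ m) n) (x : {ffun 'I_r -> Z}) :
  \sum_(l < r) x l *: a l = \row_l x l *m \matrix_l a l.
Proof. by rewrite mulmx_sum_row; apply: eq_bigr => l _; rewrite mxE rowK. Qed.

Lemma lin_indepE r (a : 'I_r -> pvec (p ^ m) n) : lin_indep a = row_indep (\matrix_l a l).
Proof.
apply/forallP/row_indepP => [aind y | Aind x].
  have := aind [ffun l => y 0 l]; rewrite sum_scale_rows.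
  have -> : \row_l [ffun l => y 0 l] l = y by apply/rowP => l; rewrite mxE ffunE.
  move=> /implyP yA0 /eqP /yA0 /forallP x0; apply/rowP => l.
  by have /eqP := x0 l; rewrite ffunE mxE.
apply/implyP; rewrite sum_scale_rows => /eqP /Aind x0; apply/forallP => l.
by have /rowP/(_ l) := x0; rewrite !mxE => ->.
Qed.

Lemma pairwise_symp_orthE r (a : 'I_r -> pvec (p ^ m) n) :
  pairwise_symp_orth a = isotropic (\matrix_l a l).
Proof.
have sympE l l' : symp (a l) (a l') = (\matrix_l a l *m Om *m (\matrix_l a l)^T) l l'.
  rewrite /symp -symp_mxE; set M := \matrix_l a l.
  have -> : (M *m Om *m M^T) l l' = (row l (M *m Om) *m (row l' M)^T) 0 0.
    by rewrite !mxE; apply: eq_bigr => k _; rewrite !mxE.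
  by rewrite row_mul !rowK.
apply/forallP/eqP => [orth | iso l]; last by apply/forallP => l'; rewrite sympE iso mxE.
by apply/matrixP => l l'; rewrite -sympE mxE; apply/eqP; move/forallP: (orth l).
Qed.

Lemma zspanE r (a : 'I_r -> pvec (p ^ m) n) : zspan a = mx_span (\matrix_l a l).
Proof.
apply/setP => v; rewrite inE; apply/existsP/imsetP => [[x /eqP ->] | [y _ ->]].
  by exists (\row_l x l); rewrite ?inE ?sum_scale_rows.
exists [ffun l => y 0 l]; rewrite sum_scale_rows; apply/eqP; congr (_ *m _).
by apply/rowP => l; rewrite !mxE ffunE.
Qed.

Lemma stab_codesE k : stab_codes (p ^ m) n k = @mx_span (n - k) @: gens (n - k).
Proof.
apply/setP => C; rewrite inE; apply/existsP/imsetP => [[a /and3P [aind aorth /eqP ->]] | [A]].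
  by exists (\matrix_l a l); rewrite ?inE -?lin_indepE -?pairwise_symp_orthE ?aind ?zspanE.
rewrite inE => Agen ->; exists [ffun l => row l A].
rewrite lin_indepE pairwise_symp_orthE zspanE.
have -> : \matrix_l [ffun l => row l A] l = A by apply/row_matrixP => l; rewrite rowK ffunE.
by case/andP: Agen => -> ->; rewrite eqxx.
Qed.

Lemma card_stab_codes_mul k :
  (#|stab_codes (p ^ m) n k|
     * \prod_(l < n - k) ((p ^ (m - 1)) ^ (n - k) * (p ^ (n - k) - p ^ l))
   = \prod_(l < n - k) ((p ^ (m - 1)) ^ (n + n - l) * (p ^ (n + n - l) - p ^ l)))%N.
Proof. by rewrite stab_codesE -card_row_indep -card_isotropic_indep card_gens. Qed.

End Codes.
End PrimePowerModulus.

Lemma sum_sub_ord s r : (r <= s.+1)%N ->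
  ((\sum_(l < r) (s - l)) * 2 = r * (2 * s + 1 - r))%N.
Proof.
elim: r => [|r IH] r_le; first by rewrite big_ord0.
by rewrite big_ord_recr /= mulnDl IH ?(ltnW r_le) //; nia.
Qed.

Lemma code_count_factor (p h n k l : nat) : (1 < p)%N -> (l < n - k)%N ->
  (h%:R : rat) ^+ (n + k - l) * ((p ^ (n - l) - 1)%:R / (p ^ (n - k - l) - 1)%:R)
    * (p ^ (n - l) + 1)%:R * (h ^ (n - k) * (p ^ (n - k) - p ^ l))%:R
  = (h ^ (n + n - l) * (p ^ (n + n - l) - p ^ l))%:R.
Proof.
move=> p_gt1 lt_l.
have pX_ge1 e : (1 <= p ^ e)%N by rewrite expn_gt0 ltnW.
have pX_gt1 : (1 < p ^ (n - k - l))%N by rewrite -(expn0 p) ltn_exp2l // subn_gt0.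
have -> : (h ^ (n + n - l) = h ^ (n + k - l) * h ^ (n - k))%N.
  by rewrite -expnD; congr (_ ^ _)%N; lia.
have -> : (p ^ (n - k) = p ^ l * p ^ (n - k - l))%N.
  by rewrite -expnD; congr (_ ^ _)%N; lia.
have -> : (p ^ (n + n - l) = p ^ l * (p ^ (n - l) * p ^ (n - l)))%N.
  by rewrite -!expnD; congr (_ ^ _)%N; lia.
have q_neq0 : ((p ^ (n - k - l) - 1)%:R : rat) != 0.
  by rewrite pnatr_eq0 subn_eq0 -ltnNge.
have subE a b : (a * b - a = a * (b - 1))%N by rewrite mulnBr muln1.
rewrite !subE !natrM !natrB ?muln_gt0 ?pX_ge1 // !natrM natrD !natrX in q_neq0 *.
by field.
Qed.

Theorem lemma2 (p m n k : nat) :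
  prime p -> (1 <= m)%N -> (1 <= n)%N -> (k < n)%N ->
  (#|stab_codes (p ^ m) n k|)%:R =
    ((p ^ (m - 1))%:R : rat) ^+ (((n - k) * (n + 3 * k + 1)) %/ 2)
    * (\prod_(j < n - k) ((p ^ (n - j) - 1)%:R / (p ^ (n - k - j) - 1)%:R))
    * (\prod_(j < n - k) (p ^ (n - j) + 1)%:R).
Proof.
move=> p_pr m_gt0 _ lt_kn; have p_gt1 := prime_gt1 p_pr.
have expE : (((n - k) * (n + 3 * k + 1)) %/ 2 = \sum_(l < n - k) (n + k - l))%N.
  have sum2 : ((\sum_(l < n - k) (n + k - l)) * 2 = (n - k) * (n + 3 * k + 1))%N.
    by rewrite sum_sub_ord; [congr (_ * _)%N | ]; lia.
  by rewrite -sum2 mulnK.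
have gl_neq0 : ((\prod_(l < n - k) ((p ^ (m - 1)) ^ (n - k) * (p ^ (n - k) - p ^ l)))%:R
                : rat) != 0.
  rewrite pnatr_eq0 -lt0n prodn_gt0 // => l.
  by rewrite muln_gt0 !expn_gt0 prime_gt0 // subn_gt0 ltn_exp2l // ltn_ord.
apply: (mulIf gl_neq0); rewrite -natrM card_stab_codes_mul // !natr_prod expE.
rewrite -prodrXr -!big_split /=.
by apply: eq_bigr => l _; rewrite code_count_factor.
Qed.
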